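(* Let $A\in\mathbb{R}^{m\times N}$ with $N=pn$. Let $1<q_2\le q_1\le\infty$ and set $\tilde q=\frac{q_2(q_1-1)}{q_1(q_2-1)}$ (with $\tilde q=\frac{q_2}{q_2-1}$ when $q_1=\infty$). Then for any real number $s$ with $1\le s\le p^{1/\tilde q}$, $$\beta_{q_1,s}(A)\ \ge\ \beta_{q_2,s^{\tilde q}}(A)\ \ge\ s^{-\tilde q}\,\beta_{q_1,s^{\tilde q}}(A).$$
   Context: Every $\mathbf{x}\in\mathbb{R}^N$ is partitioned into $p$ consecutive blocks of length $n$: $\mathbf{x}=[\mathbf{x}_1^T,\dots,\mathbf{x}_p^T]^T$, $\mathbf{x}_i\in\mathbb{R}^n$. Mixed norms: $\lVert\mathbf{x}\rVert_{2,q}=(\sum_{i=1}^p\lVert\mathbf{x}_i\rVert_2^q)^{1/q}$ for $0<q<\infty$, $\lVert\mathbf{x}\rVert_{2,\infty}=\max_i\lVert\mathbf{x}_i\rVert_2$. For nonzero $\mathbf{x}$ and $q\in(1,\infty)$ the $q$-ratio block sparsity is $k_q(\mathbf{x})=\left(\lVert\mathbf{x}\rVert_{2,1}/\lVert\mathbf{x}\rVert_{2,q}\right)^{q/(q-1)}$, and $k_\infty(\mathbf{x})=\lVert\mathbf{x}\rVert_{2,1}/\lVert\mathbf{x}\rVert_{2,\infty}$. For $s\in[1,p]$ and $q\in(1,\infty]$, the $q$-ratio block constrained minimal singular value of $A$ is $$\beta_{q,s}(A)=\min_{\mathbf{z}\neq\mathbf{0},\ k_q(\mathbf{z})\le s}\frac{\lVert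 A\mathbf{z}\rVert_2}{\lVert\mathbf{z}\rVert_{2,q}}.$$ *)

From HB Require Import structures.
From mathcomp Require Import all_boot all_order all_algebra.
From mathcomp Require Import all_classical all_reals all_analysis.
Set Implicit Arguments. Unset Strict Implicit. Unset Printing Implicit Defensive.
Import Order.TTheory GRing.Theory Num.Theory.
Local Open Scope ring_scope.

Section BlockDefs.
Variable R : realType.
Variables (p n : nat).

Lemma blk_proof (i : 'I_p) (j : 'I_n) : (i * n + j < p * n)%N.
Proof.
case: i j => i Hi [j Hj] /=.
apply: (@leq_trans (i * n + n)); first by rewrite ltn_add2l.
by rewrite -[X in (_ + X <= _)%N]mul1n -mulnDl addn1 leq_mul2r Hi orbT.
Qed.

(* global index of the j-th entry of the i-th block: i*n + j *)
Definition blk (i : 'I_p) (j : 'I_n) : 'I_(p * n) := Ordinal (blk_proof i j).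

Definition block_norm (x : 'cV[R]_(p * n)) (i : 'I_p) : R :=
  Num.sqrt (\sum_(j < n) (x (blk i j) 0) ^+ 2).

Definition mixnorm (q : \bar R) (x : 'cV[R]_(p * n)) : R :=
  match q with
  | EFin r => powR (\sum_(i < p) powR (block_norm x i) r) (r^-1)
  | +oo%E => \big[Num.max/0]_(i < p) block_norm x i
  | -oo%E => 0
  end.

Definition kq (q : \bar R) (x : 'cV[R]_(p * n)) : R :=
  match q with
  | EFin r => powR (mixnorm 1%:E x / mixnorm q x) (r / (r - 1))
  | _ => mixnorm 1%:E x / mixnorm q x
  end.

End BlockDefs.

Definition norm2 (R : realType) (k : nat) (v : 'cV[R]_k) : R :=
  Num.sqrt (\sum_(i < k) (v i 0) ^+ 2).

(* q-ratio block constrained minimal singular value beta_{q,s}(A)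
   (the minimum is attained; we write it as the infimum of the set) *)
Definition beta (R : realType) (m p n : nat) (q : \bar R) (s : R)
    (A : 'M[R]_(m, p * n)) : R :=
  inf [set norm2 (A *m z) / mixnorm q z |
        z in [set z : 'cV[R]_(p * n) | z != 0 /\ kq q z <= s]]%classic.

(* tilde q = q2 (q1 - 1) / (q1 (q2 - 1)); q2/(q2-1) if q1 = oo;
   1 if q1 = q2 = oo (limiting value) *)
Definition qtilde (R : realType) (q1 q2 : \bar R) : R :=
  match q1, q2 with
  | EFin a, EFin b => b * (a - 1) / (a * (b - 1))
  | +oo%E, EFin b => b / (b - 1)
  | _, _ => 1
  end.

(* Let a be the family of block norms of a nonzero z, L = ||a||_1 and
   N_q = ||a||_q, so that k_q(z) = (L / N_q)^(q^* ) with q^* = q / (q - 1) the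
   Hoelder conjugate exponent, and tilde q = q2^* / q1^*.
   Since N_q is nonincreasing in q, k_q2 <= (L / N_q1)^(q2^* ) = k_q1^(tilde q):
   the feasible set of beta_{q1,s} lies in that of beta_{q2,s^tilde q}, on which
   the ratio ||Az|| / N_q2 is the smaller one.
   Hoelder's inequality makes r |-> ln (sum_i a_i^r) convex, and
   ln k_q = ln L - (ln (sum_i a_i^q) - ln L) / (q - 1) is minus a chord slope of
   it, so k_q is nonincreasing in q; with N_q2 <= L <= k_q1 N_q1 this gives the
   second inequality. *)

From Pilot Require Import Defs.
From HB Require Import structures.
From mathcomp Require Import all_boot all_order all_algebra.
From mathcomp Require Import all_classical all_reals all_analysis.
From mathcomp Require Import ring.
Import Order.TTheory GRing.Theory Num.Theory.
Local Open Scope ring_scope.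
Local Open Scope classical_set_scope.

Local Notation "p ^*" := (hoelder_conjugate p) : ereal_scope.

Section finite_hoelder.
Context {R : realType}.

Lemma ler_sum_term {I : finType} (F : I -> R) (j : I) :
  (forall i, 0 <= F i) -> F j <= \sum_i F i.
Proof. by move=> F0; rewrite (bigD1 j) //= lerDl sumr_ge0. Qed.

Lemma powRK (x r : R) : 0 <= x -> r != 0 -> (x `^ r) `^ r^-1 = x.
Proof. by move=> x0 r0; rewrite -powRrM mulfV // powRr1. Qed.

Lemma powR_mul_le_conv (x y t : R) : 0 <= x -> 0 <= y -> 0 < t < 1 ->
  x `^ t * y `^ (1 - t) <= t * x + (1 - t) * y.
Proof.
move=> x0 y0 /andP[t0 t1]; have t1' : 0 < 1 - t by rewrite subr_gt0.
have := @conjugate_powR _ (x `^ t) (y `^ (1 - t)) t^-1 (1 - t)^-1.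
rewrite !powRK ?gt_eqF // !invrK (mulrC x) (mulrC y); apply; rewrite ?powR_ge0 ?invr_gt0 //.
by rewrite addrC subrK.
Qed.

Lemma hoelder_sum (I : finType) (u v : I -> R) (t : R) :
    (forall i, 0 <= u i) -> (forall i, 0 <= v i) -> 0 < t < 1 ->
  \sum_i u i `^ t * v i `^ (1 - t) <=
    (\sum_i u i) `^ t * (\sum_i v i) `^ (1 - t).
Proof.
move=> u0 v0 t01; have /andP[t0 t1] := t01.
have t1' : 1 - t != 0 by rewrite subr_eq0 gt_eqF.
set U := \sum_i u i; set V := \sum_i v i.
have U0 : 0 <= U by exact: sumr_ge0.
have V0 : 0 <= V by exact: sumr_ge0.
have [Ueq0|Uneq0] := eqVneq U 0.
  rewrite big1 ?mulr_ge0 ?powR_ge0 // => i _.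
  by rewrite (psumr_eq0P (fun i _ => u0 i) Ueq0) // powR0 ?mul0r ?gt_eqF.
have [Veq0|Vneq0] := eqVneq V 0.
  rewrite big1 ?mulr_ge0 ?powR_ge0 // => i _.
  by rewrite (psumr_eq0P (fun i _ => v0 i) Veq0) // powR0 ?mulr0.
have term i : u i `^ t * v i `^ (1 - t) <=
    U `^ t * V `^ (1 - t) * (t * (u i / U) + (1 - t) * (v i / V)).
  rewrite -{1}(divfK Uneq0 (u i)) -{1}(divfK Vneq0 (v i)).
  rewrite !(@powRM _ (_ / _)) ?divr_ge0 // mulrACA [X in X <= _]mulrC.
  by rewrite ler_wpM2l ?mulr_ge0 ?powR_ge0 // powR_mul_le_conv ?divr_ge0.
apply: le_trans (ler_sum _ (fun i _ => term i)) _.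
rewrite -mulr_sumr big_split /= -!mulr_sumr -!mulr_suml -/U -/V.
by rewrite !mulfV // !mulr1 addrC subrK mulr1.
Qed.

End finite_hoelder.

(* [mixnorm] and [kq] of Defs, for an arbitrary finite family instead of the
   block norms (see mixnormE and kqE). *)
Definition lnorm {R : realType} {I : finType} (q : \bar R) (a : I -> R) : R :=
  match q with
  | r%:E => (\sum_i a i `^ r) `^ r^-1
  | +oo%E => \big[Num.max/0]_i a i
  | -oo%E => 0
  end.

Definition sparsity {R : realType} {I : finType} (q : \bar R) (a : I -> R) : R :=
  match q with
  | r%:E => (lnorm 1%:E a / lnorm q a) `^ (r / (r - 1))
  | _ => lnorm 1%:E a / lnorm q a
  end.

Section conjugate_exponent.
Context {R : realType}.
Implicit Types q : \bar R.

Lemma fine_conjugateE (r : R) : 1 < r -> fine (r%:E)^* = r / (r - 1).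
Proof.
move=> r1; rewrite /hoelder_conjugate /= eqe gt_eqF ?(lt_trans ltr01) //=.
by rewrite -EFinB /= inver gt_eqF ?subr_gt0.
Qed.

Lemma fine_conjugate_ge1 q : (1 < q)%E -> 1 <= fine q^*.
Proof.
case: q => [r r1| _|//]; last by rewrite hoelder_conjugatey.
rewrite lte_fin in r1; rewrite fine_conjugateE //.
by rewrite ler_pdivlMr ?subr_gt0 // mul1r gerBl.
Qed.

Lemma qtildeE q1 q2 : (1 < q2)%E -> (q2 <= q1)%E ->
  qtilde q1 q2 = fine q2^* / fine q1^*.
Proof.
case: q2 => [r2| |//]; case: q1 => [r1| |//] //; rewrite /qtilde ?lte_fin ?lee_fin.
- move=> r21 r12; rewrite !fine_conjugateE ?(lt_le_trans r21) //.
  have r1_gt1 : 1 < r1 by exact: lt_le_trans r12.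
  field; rewrite !subr_eq0 !gt_eqF ?(lt_trans ltr01) //.
- by move=> r21 _; rewrite hoelder_conjugatey divr1 fine_conjugateE.
- by rewrite hoelder_conjugatey divr1.
Qed.

Lemma qtilde_ge0 q1 q2 : (1 < q2)%E -> (q2 <= q1)%E -> 0 <= qtilde q1 q2.
Proof.
move=> q2_gt1 q21; rewrite qtildeE // divr_ge0 // (le_trans ler01) //.
  exact: fine_conjugate_ge1.
exact/fine_conjugate_ge1/(lt_le_trans q2_gt1).
Qed.

End conjugate_exponent.

Section lnorm.
Context {R : realType} {I : finType} {a : I -> R}.
Hypothesis a_ge0 : forall i, 0 <= a i.

Let L := \sum_i a i.
Let S r := \sum_i a i `^ r.

Lemma lnorm1 : lnorm 1%:E a = L.
Proof.
rewrite /= invr1 powRr1; first by apply: eq_bigr => i _; rewrite powRr1.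
by apply: sumr_ge0 => i _; apply: powR_ge0.
Qed.

Lemma ler_lnorm q i : (0 < q)%E -> a i <= lnorm q a.
Proof.
case: q => [r r0| _|//] /=; last exact: le_bigmax.
rewrite lte_fin in r0.
rewrite -[leLHS](@powRK _ (a i) r) ?gt_eqF //.
apply: ge0_ler_powR; rewrite ?nnegrE ?invr_ge0 ?(ltW r0) ?powR_ge0 //.
  by apply: sumr_ge0 => j _; apply: powR_ge0.
by apply: (ler_sum_term (fun j => a j `^ r)) => j; apply: powR_ge0.
Qed.

Lemma lnorm_le q1 q2 : (0 < q2)%E -> (q2 <= q1)%E -> lnorm q1 a <= lnorm q2 a.
Proof.
case: q2 => [r2| |] q2_gt0 q21; first last.
- by rewrite ltNge leNye in q2_gt0.
- by move: q21; rewrite leye_eq => /eqP ->.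
rewrite lte_fin in q2_gt0.
case: q1 q21 => [r1| |] q21; last by rewrite leeNy_eq in q21.
- rewrite lee_fin in q21; have r1_gt0 := lt_le_trans q2_gt0 q21.
  set N := lnorm r2%:E a; have N_ge0 : 0 <= N := powR_ge0 _ _.
  have aN i : a i <= N by exact: ler_lnorm.
  have splitr x : x `^ r1 = x `^ r2 * x `^ (r1 - r2).
    by rewrite -powRD subrKC // gt_eqF.
  have S_le : S r1 <= N `^ r1.
    rewrite /S (splitr N) /N /= -powRrM mulVf ?gt_eqF // powRr1;
      last by apply: sumr_ge0 => i _; apply: powR_ge0.
    rewrite mulr_suml; apply: ler_sum => i _; rewrite splitr.
    rewrite ler_wpM2l ?powR_ge0 // ge0_ler_powR ?subr_ge0 ?nnegrE ?powR_ge0 //.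
  rewrite -[leRHS](@powRK _ N r1 N_ge0); last by rewrite gt_eqF.
  apply: ge0_ler_powR; rewrite ?nnegrE ?invr_ge0 ?(ltW r1_gt0) ?powR_ge0 //.
  by apply: sumr_ge0 => i _; apply: powR_ge0.
- apply: bigmax_le; first exact: powR_ge0.
  by move=> i _; exact: ler_lnorm.
Qed.

Lemma lnorm_le_sum q : (1 <= q)%E -> lnorm q a <= L.
Proof. by rewrite -lnorm1; apply: lnorm_le. Qed.

Context {i0 : I}.
Hypothesis a_i0_gt0 : 0 < a i0.

Lemma lnorm_gt0 q : (0 < q)%E -> 0 < lnorm q a.
Proof. by move=> q0; exact: lt_le_trans a_i0_gt0 (@ler_lnorm q i0 q0). Qed.

Lemma sum_gt0 : 0 < L.
Proof. by rewrite -lnorm1; apply: lnorm_gt0. Qed.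

Lemma sum_powR_gt0 r : 0 < S r.
Proof.
apply: lt_le_trans (powR_gt0 r a_i0_gt0) (ler_sum_term _ i0 _) => i.
exact: powR_ge0.
Qed.

Lemma sparsityE q : (1 < q)%E -> sparsity q a = (L / lnorm q a) `^ fine q^*.
Proof.
case: q => [r r1| _|//]; rewrite /sparsity lnorm1.
  by rewrite fine_conjugateE // -lte_fin.
by rewrite hoelder_conjugatey powRr1 // divr_ge0 ?ltW ?sum_gt0 ?lnorm_gt0 ?ltry.
Qed.

Lemma sparsity_gt0 q : (1 < q)%E -> 0 < sparsity q a.
Proof.
move=> q1; rewrite sparsityE // powR_gt0 // divr_gt0 ?sum_gt0 // lnorm_gt0 //.
exact: lt_trans q1.
Qed.

Lemma ln_sparsity q : (1 < q)%E ->
  ln (sparsity q a) = fine q^* * (ln L - ln (lnorm q a)).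
Proof.
move=> q1; rewrite sparsityE // ln_powR ln_div // posrE ?sum_gt0 // lnorm_gt0 //.
exact: lt_trans q1.
Qed.

Lemma ln_sparsity_fin r : 1 < r ->
  ln (sparsity r%:E a) = (r * ln L - ln (S r)) / (r - 1).
Proof.
move=> r1; rewrite ln_sparsity ?lte_fin // fine_conjugateE //= ln_powR.
by field; rewrite subr_eq0 !gt_eqF ?(lt_trans ltr01).
Qed.

Lemma ln_sum_powR_convex {r1 r2} : 1 < r2 -> r2 < r1 ->
  (r1 - 1) * ln (S r2) <= (r1 - r2) * ln L + (r2 - 1) * ln (S r1).
Proof.
move=> r2_gt1 r21; have r1_gt1 := lt_trans r2_gt1 r21.
have r1B_neq0 : r1 - 1 != 0 by rewrite subr_eq0 gt_eqF.
set t := (r1 - r2) / (r1 - 1).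
have t01 : 0 < t < 1.
  by rewrite divr_gt0 ?subr_gt0 // ltr_pdivrMr ?subr_gt0 // mul1r ltrD2l ltrN2.
have tC : 1 - t = (r2 - 1) / (r1 - 1) by rewrite /t; field.
have S_le : S r2 <= L `^ t * S r1 `^ (1 - t).
  have tE : t + r1 * (1 - t) = r2 by rewrite tC /t; field.
  (* Hoelder for a_i and a_i^r1 with exponents 1/t and 1/(1 - t). *)
  have -> : S r2 = \sum_i a i `^ t * (a i `^ r1) `^ (1 - t).
    apply: eq_bigr => i _; rewrite -powRrM -powRD tE //.
    by rewrite gt_eqF // (lt_trans ltr01).
  by apply: hoelder_sum => // i; apply: powR_ge0.
move: S_le; rewrite -ler_ln ?posrE ?mulr_gt0 ?powR_gt0 ?sum_gt0 ?sum_powR_gt0 //.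
rewrite lnM ?posrE ?powR_gt0 ?sum_gt0 ?sum_powR_gt0 // !ln_powR tC /t => le_ln.
have -> : (r1 - r2) * ln L + (r2 - 1) * ln (S r1) =
    (r1 - 1) * ((r1 - r2) / (r1 - 1) * ln L + (r2 - 1) / (r1 - 1) * ln (S r1)).
  by field.
by rewrite ler_pM2l // subr_gt0.
Qed.

Lemma sum_powR_le_max r : 1 <= r -> S r <= L * lnorm +oo%E a `^ (r - 1).
Proof.
move=> r1; have M_gt0 := @lnorm_gt0 +oo%E (ltry _).
rewrite /S /L mulr_suml; apply: ler_sum => i _.
rewrite -mulr_powRB1 ?(lt_le_trans ltr01) // ler_wpM2l //.
by rewrite ge0_ler_powR ?subr_ge0 ?nnegrE ?(ltW M_gt0) // le_bigmax.
Qed.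

Lemma sparsity_le q1 q2 : (1 < q2)%E -> (q2 <= q1)%E -> sparsity q1 a <= sparsity q2 a.
Proof.
case: q2 => [r2| |] q2_gt1 q21; first last.
- by rewrite ltNge leNye in q2_gt1.
- by move: q21; rewrite leye_eq => /eqP ->.
have q1_gt1 := lt_le_trans q2_gt1 q21; rewrite lte_fin in q2_gt1.
rewrite -ler_ln ?posrE ?sparsity_gt0 // ln_sparsity_fin //.
set l := ln L; set u2 := ln (S r2).
case: q1 q21 q1_gt1 => [r1| |] q21 q1_gt1; last by rewrite leeNy_eq in q21.
- rewrite lee_fin in q21; rewrite lte_fin in q1_gt1.
  rewrite ln_sparsity_fin // ler_pdivrMr ?subr_gt0 // mulrAC ler_pdivlMr ?subr_gt0 //.
  have [->|r12_neq] := eqVneq r1 r2; first exact: lexx.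
  have r21_lt : r2 < r1 by rewrite lt_neqAle eq_sym r12_neq q21.
  have convex := ln_sum_powR_convex q2_gt1 r21_lt.
  set u1 := ln (S r1); rewrite -subr_ge0.
  have -> : (r2 * l - u2) * (r1 - 1) - (r1 * l - u1) * (r2 - 1) =
      (r1 - r2) * l + (r2 - 1) * u1 - (r1 - 1) * u2 by ring.
  by rewrite subr_ge0.
- rewrite ln_sparsity // hoelder_conjugatey mul1r ler_pdivlMr ?subr_gt0 //.
  have M_gt0 := @lnorm_gt0 +oo%E (ltry _).
  have := @sum_powR_le_max r2 (ltW q2_gt1).
  rewrite -ler_ln ?posrE ?mulr_gt0 ?powR_gt0 ?sum_gt0 ?sum_powR_gt0 //.
  rewrite lnM ?posrE ?powR_gt0 ?sum_gt0 // ln_powR => bound.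
  set m := ln (lnorm +oo%E a); rewrite -subr_ge0.
  have -> : r2 * l - u2 - (l - m) * (r2 - 1) = l + (r2 - 1) * m - u2 by ring.
  by rewrite subr_ge0.
Qed.

Lemma sum_le_sparsity_lnorm q : (1 < q)%E -> L <= sparsity q a * lnorm q a.
Proof.
move=> q1; have N_gt0 : 0 < lnorm q a by apply: lnorm_gt0; exact: lt_trans q1.
rewrite sparsityE // -ler_pdivrMr // le1r_powR ?fine_conjugate_ge1 //.
by rewrite ler_pdivlMr // mul1r lnorm_le_sum // ltW.
Qed.

Lemma sparsity_le_powR q1 q2 : (1 < q2)%E -> (q2 <= q1)%E ->
  sparsity q2 a <= sparsity q1 a `^ qtilde q1 q2.
Proof.
move=> q2_gt1 q21; have q1_gt1 := lt_le_trans q2_gt1 q21.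
have c1_neq0 : fine q1^* != 0.
  by rewrite gt_eqF // (lt_le_trans ltr01) // fine_conjugate_ge1.
have N1_gt0 : 0 < lnorm q1 a by apply: lnorm_gt0; exact: lt_trans q1_gt1.
have N2_gt0 : 0 < lnorm q2 a by apply: lnorm_gt0; exact: lt_trans q2_gt1.
rewrite !sparsityE // qtildeE // -powRrM.
have -> : fine q1^* * (fine q2^* / fine q1^*) = fine q2^*.
  by rewrite mulrCA mulfV ?mulr1.
have L_gt0 := sum_gt0.
apply: ge0_ler_powR.
- exact: le_trans ler01 (fine_conjugate_ge1 _ q2_gt1).
- by rewrite nnegrE divr_ge0 // ltW.
- by rewrite nnegrE divr_ge0 // ltW.
apply: ler_wpM2l; first exact: ltW.
rewrite lef_pV2 ?posrE //; apply: lnorm_le => //; exact: lt_trans q2_gt1.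
Qed.

Lemma lnorm_le_sparsity q1 q2 : (1 < q2)%E -> (q2 <= q1)%E ->
  lnorm q2 a <= sparsity q2 a * lnorm q1 a.
Proof.
move=> q2_gt1 q21; have q1_gt1 := lt_le_trans q2_gt1 q21.
apply: le_trans (lnorm_le_sum _ (ltW q2_gt1)) _.
apply: le_trans (sum_le_sparsity_lnorm _ q1_gt1) _.
apply: ler_wpM2r; first exact/ltW/lnorm_gt0/(lt_trans lte01 q1_gt1).
exact: sparsity_le.
Qed.

Lemma sparsity_single q : (forall i, i != i0 -> a i = 0) -> (1 < q)%E ->
  sparsity q a = 1.
Proof.
move=> a_supp q1; have q0 : (0 < q)%E by exact: lt_trans q1.
have L_eq : L = a i0 by rewrite /L (bigD1 i0) //= big1 ?addr0.
have N_eq : lnorm q a = L.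
  by apply/eqP; rewrite eq_le lnorm_le_sum ?(ltW q1) // L_eq ler_lnorm.
by rewrite sparsityE // N_eq divff ?gt_eqF ?sum_gt0 // powR1.
Qed.

End lnorm.

Section blocks.
Context {R : realType} {p n : nat}.

Lemma blk_divn (i : 'I_p) (j : 'I_n) : (blk i j %/ n)%N = i.
Proof.
have n_gt0 : (0 < n)%N := leq_ltn_trans (leq0n j) (ltn_ord j).
by rewrite /= divnMDl // divn_small // addn0.
Qed.

Lemma blk_surj (k : 'I_(p * n)) : exists i j, k = blk i j.
Proof.
have := leq_ltn_trans (leq0n k) (ltn_ord k); rewrite muln_gt0 => /andP[_ n_gt0].
have k_div : (k %/ n < p)%N by rewrite ltn_divLR.
exists (Ordinal k_div), (Ordinal (ltn_pmod k n_gt0)).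
by apply: val_inj; rewrite /= -divn_eq.
Qed.

Lemma mixnormE q (x : 'cV[R]_(p * n)) : mixnorm q x = lnorm q (block_norm x).
Proof. by []. Qed.

Lemma kqE q (x : 'cV[R]_(p * n)) : kq q x = sparsity q (block_norm x).
Proof. by []. Qed.

Lemma block_norm_ge0 (x : 'cV[R]_(p * n)) i : 0 <= block_norm x i.
Proof. exact: sqrtr_ge0. Qed.

Lemma block_norm_gt0 {x : 'cV[R]_(p * n)} : x != 0 -> exists i, 0 < block_norm x i.
Proof.
move=> x_neq0; case: (pickP (fun k => x k 0 != 0)) => [k xk | x0]; last first.
  by case/eqP: x_neq0; apply/matrixP => k j; rewrite ord1 mxE; apply/eqP/negbFE.
have [i [j kE]] := blk_surj k; exists i.
rewrite sqrtr_gt0; apply: lt_le_trans (ler_sum_term _ j _) => [|l].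
  by rewrite -kE lt_neqAle eq_sym sqrf_eq0 xk sqr_ge0.
exact: sqr_ge0.
Qed.

Lemma exists_kq_le q t : (0 < p * n)%N -> (1 < q)%E -> 1 <= t ->
  exists z : 'cV[R]_(p * n), z != 0 /\ kq q z <= t.
Proof.
rewrite muln_gt0 => /andP[p_gt0 n_gt0] q1 t1.
pose i0 : 'I_p := Ordinal p_gt0.
pose z : 'cV[R]_(p * n) := \col_k ((k %/ n)%N == i0)%:R.
have z_blk i j : z (blk i j) 0 = (i == i0)%:R by rewrite mxE blk_divn.
have z_i0 : 0 < block_norm z i0.
  rewrite sqrtr_gt0 (eq_bigr (fun=> 1)) => [|j _]; last by rewrite z_blk eqxx expr1n.
  by rewrite sumr_const card_ord ltr0n.
exists z; split.
  apply: contraTneq z_i0 => ->; rewrite /block_norm big1 ?sqrtr0 ?ltxx // => j _.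
  by rewrite mxE expr0n.
rewrite kqE (sparsity_single (block_norm_ge0 z) z_i0 _ _ q1) // => i i_neq0.
by rewrite /block_norm big1 ?sqrtr0 // => j _; rewrite z_blk (negbTE i_neq0) expr0n.
Qed.

Lemma mixnorm_le (x : 'cV[R]_(p * n)) q1 q2 : (0 < q2)%E -> (q2 <= q1)%E ->
  mixnorm q1 x <= mixnorm q2 x.
Proof. exact: lnorm_le (block_norm_ge0 x) q1 q2. Qed.

Lemma mixnorm_gt0 {q} {x : 'cV[R]_(p * n)} : (0 < q)%E -> x != 0 -> 0 < mixnorm q x.
Proof.
move=> q_gt0 /block_norm_gt0[i xi].
by rewrite mixnormE; exact: (lnorm_gt0 (block_norm_ge0 x) xi).
Qed.

Section nonzero.
Context {x : 'cV[R]_(p * n)} {q1 q2 : \bar R}.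
Hypotheses (x_neq0 : x != 0) (q2_gt1 : (1 < q2)%E) (q21 : (q2 <= q1)%E).

Let q1_gt1 : (1 < q1)%E := lt_le_trans q2_gt1 q21.

Lemma kq_le_powR_qtilde s : kq q1 x <= s -> kq q2 x <= s `^ qtilde q1 q2.
Proof.
have [i xi] := block_norm_gt0 x_neq0; rewrite !kqE => k1.
apply: le_trans (sparsity_le_powR (block_norm_ge0 x) xi _ _ q2_gt1 q21) _.
apply: ge0_ler_powR; rewrite ?nnegrE ?qtilde_ge0 //.
- exact/ltW/(sparsity_gt0 (block_norm_ge0 x) xi _ q1_gt1).
- exact: le_trans (ltW (sparsity_gt0 (block_norm_ge0 x) xi _ q1_gt1)) k1.
Qed.

Lemma kq_le : kq q1 x <= kq q2 x.
Proof.
have [i xi] := block_norm_gt0 x_neq0.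
exact: (sparsity_le (block_norm_ge0 x) xi _ _ q2_gt1 q21).
Qed.

Lemma mixnorm_le_kq : mixnorm q2 x <= kq q2 x * mixnorm q1 x.
Proof.
have [i xi] := block_norm_gt0 x_neq0.
exact: (lnorm_le_sparsity (block_norm_ge0 x) xi _ _ q2_gt1 q21).
Qed.

End nonzero.

End blocks.

Section beta.
Variables (R : realType) (m p n : nat) (A : 'M[R]_(m, p * n)).

Lemma beta_eq0 q s : (p * n = 0)%N -> beta q s A = 0.
Proof.
move=> pn0; rewrite /beta.
have -> : [set z : 'cV[R]_(p * n) | z != 0 /\ kq q z <= s] = set0.
  apply/seteqP; split=> // z [/negP z_neq0 _]; apply: z_neq0.
  by apply/eqP/matrixP => k; have := ltn_ord k; rewrite {2}pn0.
by rewrite image_set0 inf0.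
Qed.

Lemma ler_beta q1 q2 s1 s2 c : (0 < q1)%E -> (0 < q2)%E -> 0 <= c ->
    (exists z : 'cV[R]_(p * n), z != 0 /\ kq q1 z <= s1) ->
    (forall z : 'cV[R]_(p * n), z != 0 -> kq q1 z <= s1 ->
       kq q2 z <= s2 /\ c * mixnorm q1 z <= mixnorm q2 z) ->
  c * beta q2 s2 A <= beta q1 s1 A.
Proof.
move=> q1_gt0 q2_gt0 c_ge0 [z0 z0_feas] feas.
apply: lb_le_inf; first by exists (norm2 (A *m z0) / mixnorm q1 z0), z0.
move=> _ [z [z_neq0 kz] <-]; have [kz2 cN] := feas z z_neq0 kz.
have N1 := mixnorm_gt0 q1_gt0 z_neq0; have N2 := mixnorm_gt0 q2_gt0 z_neq0.
apply: le_trans (_ : c * (norm2 (A *m z) / mixnorm q2 z) <= _).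
  apply: ler_wpM2l => //; apply: ge_inf; last by exists z.
  exists 0 => _ [w [w_neq0 _] <-].
  by rewrite divr_ge0 ?sqrtr_ge0 // ltW // mixnorm_gt0.
rewrite mulrCA; apply: ler_wpM2l; first exact: sqrtr_ge0.
by rewrite ler_pdivrMr // ler_pdivlMl // mulrC.
Qed.

End beta.

Theorem proposition2 (R : realType) (m p n : nat) (A : 'M[R]_(m, p * n))
    (q1 q2 : \bar R) (s : R) :
  (1%:E < q2)%E -> (q2 <= q1)%E ->
  1 <= s -> s <= powR p%:R ((qtilde q1 q2)^-1) ->
  beta q1 s A >= beta q2 (powR s (qtilde q1 q2)) A /\
  beta q2 (powR s (qtilde q1 q2)) A >=
    powR s (- qtilde q1 q2) * beta q1 (powR s (qtilde q1 q2)) A.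
Proof.
move=> q2_gt1 q21 s_ge1 _; have q1_gt1 := lt_le_trans q2_gt1 q21.
have q1_gt0 := lt_trans lte01 q1_gt1; have q2_gt0 := lt_trans lte01 q2_gt1.
set qt := qtilde q1 q2.
have [pn0|pn_gt0] := posnP (p * n); first by rewrite !beta_eq0 // mulr0.
split.
- rewrite -[leLHS]mul1r; apply: ler_beta => //; first exact: exists_kq_le.
  move=> z z_neq0 kz; rewrite mul1r; split; first exact: kq_le_powR_qtilde.
  exact: mixnorm_le.
- have sqt_gt1 : 1 <= s `^ qt by rewrite -(powRr0 s) ler_powR // qtilde_ge0.
  apply: ler_beta => //; [exact: powR_ge0 | exact: exists_kq_le |].
  move=> z z_neq0 kz; split; first exact: le_trans (kq_le z_neq0 q2_gt1 q21) kz.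
  rewrite powRN ler_pdivrMl ?(lt_le_trans ltr01) //.
  apply: le_trans (mixnorm_le_kq z_neq0 q2_gt1 q21) _.
  by apply: ler_wpM2r kz; exact/ltW/(mixnorm_gt0 q1_gt0 z_neq0).
Qed.
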